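(* Let $g:(0,\infty)\to(0,\infty)$ be a function which is constant on the interval $(0,4)$ and such that, for some positive real number $K$, $g(x)=K\left(\frac{x}{2}+1\right)g\left(\frac{x}{2}+1\right)$ for all $x\ge4$. Then there exists a positive real number $c$ such that $g(x)<x^{\log_2(x)/2+c}$ for every sufficiently large real number $x$. *)

From Stdlib Require Export Reals.
Open Scope R_scope.

Definition log2 (x : R) : R := ln x / ln 2.

(* Put w = x - 2: the recursion step x |-> x/2 + 1 becomes w |-> w/2.  The function
   F c w = exp (ln w ^ 2 / (2 ln 2) + c ln w) = w ^ (log2 w / 2 + c) shrinks under
   w |-> w/2 by a factor w 2^(c - 1/2), which beats the factor K (x/2 + 1) <= 2 K w
   of the recursion as soon as 2^c >= 4 K.  Hence g x <= a F c (x - 2) <= a F c x by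
   induction from the constant value a on (0, 4), and a F c x < x F c x = x ^ (log2 x / 2 + c + 1)
   once x > a. *)
From Stdlib Require Import Reals Lra Psatz.
Open Scope R_scope.

Lemma ln_le x y : 0 < x -> x <= y -> ln x <= ln y.
Proof.
intros Hx [Hxy | <-]; [left; apply ln_increasing |]; lra.
Qed.

Lemma exp_le x y : x <= y -> exp x <= exp y.
Proof.
intros [Hxy | <-]; [left; apply exp_increasing |]; lra.
Qed.

Lemma ln2_pos : 0 < ln 2.
Proof. rewrite <- ln_1; apply ln_increasing; lra. Qed.

Lemma ln_div2 z : 0 < z -> ln (z / 2) = ln z - ln 2.
Proof.
intros Hz; unfold Rdiv; rewrite ln_mult, ln_Rinv by lra; ring.
Qed.

Definition log2_growth (c z : R) : R := exp (ln z ^ 2 / (2 * ln 2) + c * ln z).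

Lemma Rpower_log2_growth c z : 0 < z ->
  Rpower z (log2 z / 2 + c) = log2_growth c z.
Proof.
intros Hz; pose proof ln2_pos.
unfold Rpower, log2, log2_growth; f_equal; field; lra.
Qed.

Lemma log2_growth_S c z : 0 < z -> log2_growth (c + 1) z = z * log2_growth c z.
Proof.
intros Hz; unfold log2_growth.
replace (ln z ^ 2 / (2 * ln 2) + (c + 1) * ln z)
  with (ln z + (ln z ^ 2 / (2 * ln 2) + c * ln z)) by ring.
now rewrite exp_plus, exp_ln.
Qed.

Lemma log2_growth_1 c : log2_growth c 1 = 1.
Proof.
unfold log2_growth; rewrite ln_1, <- exp_0; f_equal; field.
apply Rgt_not_eq, ln2_pos.
Qed.

Lemma log2_growth_le c y z : 0 <= c -> 1 <= y -> y <= z ->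
  log2_growth c y <= log2_growth c z.
Proof.
intros Hc Hy Hyz; pose proof ln2_pos; unfold log2_growth; apply exp_le.
assert (0 <= ln y) by (rewrite <- ln_1; apply ln_le; lra).
assert (ln y <= ln z) by (apply ln_le; lra).
assert (ln y ^ 2 <= ln z ^ 2) by nra.
assert (ln y ^ 2 / (2 * ln 2) <= ln z ^ 2 / (2 * ln 2)).
{ apply Rmult_le_compat_r; [left; apply Rinv_0_lt_compat |]; lra. }
nra.
Qed.

Lemma log2_growth_ge1 c z : 0 <= c -> 1 <= z -> 1 <= log2_growth c z.
Proof.
intros Hc Hz; rewrite <- (log2_growth_1 c); apply log2_growth_le; lra.
Qed.

Lemma log2_growth_half c K z : 0 < K -> log2 K + 2 <= c -> 2 <= z ->
  K * (z / 2 + 2) * log2_growth c (z / 2) <= log2_growth c z.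
Proof.
intros HK Hc Hz; pose proof ln2_pos.
assert (Hc' : ln K + 2 * ln 2 <= c * ln 2).
{ unfold log2 in Hc; apply Rmult_le_compat_r with (r := ln 2) in Hc; [| lra].
  replace ((ln K / ln 2 + 2) * ln 2) with (ln K + 2 * ln 2) in Hc by (field; lra).
  exact Hc. }
assert (Hfactor : K * (z / 2 + 2) <= exp (ln K + ln 2 + ln z)).
{ rewrite !exp_plus, !exp_ln by lra; nra. }
assert (Hsquare : (ln z - ln 2) ^ 2 / (2 * ln 2)
                  = ln z ^ 2 / (2 * ln 2) - ln z + ln 2 / 2) by (field; lra).
unfold log2_growth; rewrite ln_div2, Hsquare by lra.
apply Rle_trans with (exp (ln K + ln 2 + ln z) *
  exp (ln z ^ 2 / (2 * ln 2) - ln z + ln 2 / 2 + c * (ln z - ln 2))).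
- apply Rmult_le_compat_r; [left; apply exp_pos | exact Hfactor].
- rewrite <- exp_plus; apply exp_le; lra.
Qed.

Lemma recursion_comparison (g F : R -> R) (K : R) :
  0 <= K ->
  (forall x, 3 <= x < 4 -> g x <= F x) ->
  (forall x, 4 <= x -> g x = K * (x / 2 + 1) * g (x / 2 + 1)) ->
  (forall x, 4 <= x -> K * (x / 2 + 1) * F (x / 2 + 1) <= F x) ->
  forall x, 3 <= x -> g x <= F x.
Proof.
intros HK Hseed Hrec Hsuper.
assert (Hbounded : forall n : nat, forall x, 3 <= x < INR n -> g x <= F x).
{ induction n as [| n IH]; intros x [Hx3 Hxn]; [simpl in Hxn; lra |].
  rewrite S_INR in Hxn.
  destruct (Rlt_le_dec x 4) as [Hx4 | Hx4]; [apply Hseed; lra |].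
  (* the step x |-> x/2 + 1 decreases x by at least 1 on [4, oo) *)
  assert (Hprev : g (x / 2 + 1) <= F (x / 2 + 1)) by (apply IH; lra).
  rewrite Hrec by exact Hx4.
  apply Rle_trans with (K * (x / 2 + 1) * F (x / 2 + 1)); [| now apply Hsuper].
  apply Rmult_le_compat_l; [nra | exact Hprev]. }
intros x Hx.
destruct (INR_archimed 1 x) as [n Hn]; [lra |].
apply (Hbounded n); lra.
Qed.

Theorem lemma8p7 (g : R -> R) (K : R)
  (hpos : forall x, 0 < x -> 0 < g x)
  (hconst : exists a, forall x, 0 < x < 4 -> g x = a)
  (hK : 0 < K)
  (hrec : forall x, 4 <= x -> g x = K * (x / 2 + 1) * g (x / 2 + 1)) :
  exists c, 0 < c /\ exists M, forall x, M <= x ->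
    g x < Rpower x (log2 x / 2 + c).
Proof.
destruct hconst as [a Ha].
assert (Ha_pos : 0 < a) by (rewrite <- (Ha 1) by lra; apply hpos; lra).
set (c := Rmax 0 (log2 K + 2)).
assert (Hc0 : 0 <= c) by apply Rmax_l.
assert (HcK : log2 K + 2 <= c) by apply Rmax_r.
assert (Hbound : forall x, 3 <= x -> g x <= a * log2_growth c (x - 2)).
{ apply (recursion_comparison g _ K); [lra | | exact hrec |].
  - intros x Hx; rewrite Ha by lra.
    pose proof (log2_growth_ge1 c (x - 2) Hc0 ltac:(lra)); nra.
  - intros x Hx.
    replace (x / 2 + 1 - 2) with ((x - 2) / 2) by field.
    pose proof (log2_growth_half c K (x - 2) hK HcK ltac:(lra)) as Hhalf.
    replace ((x - 2) / 2 + 2) with (x / 2 + 1) in Hhalf by field.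
    nra. }
exists (c + 1); split; [lra |].
exists (Rmax 3 (a + 1)); intros x Hx.
assert (Hx3 : 3 <= x) by exact (Rle_trans _ _ _ (Rmax_l _ _) Hx).
assert (Hxa : a + 1 <= x) by exact (Rle_trans _ _ _ (Rmax_r _ _) Hx).
rewrite Rpower_log2_growth, log2_growth_S by lra.
pose proof (log2_growth_le c (x - 2) x Hc0 ltac:(lra) ltac:(lra)).
pose proof (log2_growth_ge1 c x Hc0 ltac:(lra)).
pose proof (Hbound x Hx3).
nra.
Qed.
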